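(* Let $Z$ be a smooth extremal assignment of order $n$ with contraction indicator $\mathcal{C}$, and let $B_1,\dots,B_k$ be the maximal elements of $\mathcal{C}$. Suppose one of the following holds: (1) there is $j\in[n]$ with $j\notin\bigcup_{i=1}^k B_i$; (2) there is $j\in[n]$ contained in exactly one of $B_1,\dots,B_k$; (3) $|B_i|<n/2$ for all $i$. Then there exists weight data $A$ with $Z\subset Z_A$ (i.e. $Z(G)\subset Z_A(G)$ for all $G\in S(n)$).
   Context: $[n]=\{1,\dots,n\}$. A stable $n$-labeled tree is a finite tree with $n$ leaves labeled bijectively by $[n]$, all internal vertices of degree $\ge 3$; $V(G)$ its internal vertices; $S(n)$ the set of such trees up to label-preserving isomorphism, $S_2(n)$ those with 2 internal vertices; $\ell(v)$ is the set of labels of leaves adjacent to $v$. $G\rightsquigarrow G'$: $G'$ obtained by collapsing connected sets of internal vertices, inducing surjection $\pi:V(G)\to V(G')$; $v\rightsquigarrow v'$ means $\pi(v)=v'$. An extremal assignment of order $n$: rule $Z(G)\subset V(G)$ for $G\in S(n)$ with (a) $Z(G)\ne V(G)$, (b) if $G\rightsquigarrow G'$ and $\pi^{-1}(v')=\{v_1,\dots,v_k\}$ then $v'\in Z(G')\iff v_1,\dots,v_k\in Z(G)$. $Z$ is smooth if for every $G$, $v\in Z(G)$ there are $G'\in S_2(n)$, $v'\in Z(G')$ with $G\rightsquigarrow G'$, $v\rightsquigarrow v'$. The contraction indicator of $Z$ is $\mathcal{C}=\{\ell(v):G\in S_2(n),v\in Z(G)\}$. Weight data: $A=(a_1,\dots,a_n)$,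 $a_i\in\mathbb{Q}\cap(0,1]$, $\sum a_i>2$. A tail of $G$ is a nonempty connected $T\subset V(G)$ joined to $V(G)\setminus T$ by exactly one edge; $\ell(T)$ the labels of leaves adjacent to $T$. $Z_A(G)=\{v\in V(G):\exists$ tail $T\ni v$ with $\sum_{i\in\ell(T)}a_i\le1\}$. *)

From HB Require Import structures.
From mathcomp Require Import all_boot all_order all_algebra.
Set Implicit Arguments. Unset Strict Implicit. Unset Printing Implicit Defensive.
Import Order.TTheory GRing.Theory Num.Theory.

(* A stable n-labeled tree, represented concretely: its internal vertices are
   'I_sm; leaf i (label i) is attached to internal vertex slf i; sadj is the
   adjacency relation between internal vertices.  The whole tree (leaves +
   internal vertices) is a tree iff the internal graph is a tree (nonempty,
   connected, with sm-1 edges), leaves being pendant. *)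
Record stree (n : nat) := STree {
  sm : nat;
  slf : 'I_n -> 'I_sm;
  sadj : rel 'I_sm;
  sadj_sym : symmetric sadj;
  sadj_irr : irreflexive sadj;
  sm_pos : 0 < sm;
  sadj_conn : forall x y : 'I_sm, connect sadj x y;
  sadj_edges : #|[set p : 'I_sm * 'I_sm | sadj p.1 p.2]| = (2 * (sm - 1))%N;
  sdeg : forall v : 'I_sm,
    3 <= #|[set i : 'I_n | slf i == v]| + #|[set w | sadj v w]|
}.

Definition lab n (G : stree n) (v : 'I_(sm G)) : {set 'I_n} :=
  [set i | @slf n G i == v].

(* G ~> G' via the induced map p : V(G) -> V(G'): G' is (isomorphic to) the
   tree obtained by collapsing the fibres of p, which are connected sets of
   internal vertices. Isomorphisms are the special case of bijective p. *)
Definition contr n (G G' : stree n) (p : 'I_(sm G) -> 'I_(sm G')) : Prop :=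
  [/\ (forall v', exists v, p v = v'),
      (forall v w, p v = p w ->
          connect [rel x y | @sadj n G x y && (p x == p y)] v w),
      (forall i, @slf n G' i = p (@slf n G i)) &
      (forall v' w', v' != w' ->
          (@sadj n G' v' w' <-> exists v w, [/\ p v = v', p w = w' & @sadj n G v w]))].

Definition assignment n := forall G : stree n, {set 'I_(sm G)}.

Definition extremal n (Z : assignment n) : Prop :=
  (forall G : stree n, Z G != [set: 'I_(sm G)]) /\
  (forall (G G' : stree n) (p : 'I_(sm G) -> 'I_(sm G')), contr p ->
     forall v', v' \in Z G' <-> (forall v, p v = v' -> v \in Z G)).

Definition smooth n (Z : assignment n) : Prop :=
  forall (G : stree n) (v : 'I_(sm G)), v \in Z G ->
    exists (G' : stree n) (p : 'I_(sm G) -> 'I_(sm G')),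
      [/\ sm G' = 2, contr p & p v \in Z G'].

Definition inC n (Z : assignment n) (B : {set 'I_n}) : Prop :=
  exists (G : stree n) (v : 'I_(sm G)), [/\ sm G = 2, v \in Z G & lab v = B].

Definition maximalC n (Z : assignment n) (B : {set 'I_n}) : Prop :=
  inC Z B /\ forall B', inC Z B' -> B \subset B' -> B' = B.

Definition weight_data n (a : 'I_n -> rat) : Prop :=
  (forall i, 0 < a i <= 1)%R /\ (2 < \sum_(i < n) a i)%R.

Definition tail n (G : stree n) (T : {set 'I_(sm G)}) : Prop :=
  [/\ T != set0,
      (forall x y, x \in T -> y \in T ->
          connect [rel u w | @sadj n G u w && (u \in T) && (w \in T)] x y) &
      #|[set p : 'I_(sm G) * 'I_(sm G) |
           [&& p.1 \in T, p.2 \notin T & @sadj n G p.1 p.2]]| = 1%N].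

Definition tlab n (G : stree n) (T : {set 'I_(sm G)}) : {set 'I_n} :=
  [set i | @slf n G i \in T].

Definition inZA n (a : 'I_n -> rat) (G : stree n) (v : 'I_(sm G)) : Prop :=
  exists T : {set 'I_(sm G)}, [/\ tail T, v \in T & (\sum_(i in tlab T) a i <= 1)%R].

From HB Require Import structures.
From mathcomp Require Import all_boot all_order all_algebra zify.
From Stdlib Require Import Classical.
Import Order.TTheory GRing.Theory Num.Theory.
Set Implicit Arguments. Unset Strict Implicit. Unset Printing Implicit Defensive.

(* Integer weights k_i <= D with sum k > 2 D and sum_(i in B) k_i <= D for every maximal B in C
   give weight data a = k / D with Z \subset Z_A: by smoothness every v in Z(G) is sent into Z(G')
   by a contraction onto a two-vertex tree G'; the fibre of its image is a tail of G whose labels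
   form a member of C, hence lie in a maximal B, so the tail has weight at most 1. Such k exist in
   each of the three cases; in case (2) one needs that no two members of C cover [n], for otherwise
   some tree of S(n) contracts onto both witnessing two-vertex trees, and extremality then puts all
   of its vertices in Z. *)

Lemma connect_exit (T : finType) (e : rel T) (X : {set T}) x y :
  connect e x y -> x \in X -> y \notin X -> exists a b, [/\ a \in X, b \notin X & e a b].
Proof.
move/connectP=> [p pth ->]; elim: p x pth => [|z p IH] x /=; first by move=> _ ->.
move=> /andP[exz pz] xX; case zX: (z \in X); first exact: IH.
by move=> _; exists x, z; rewrite zX.
Qed.

Section InducedSubgraphs.
Variables (T : finType) (e : rel T).

Definition connected_in (X : {set T}) :=
  forall x y, x \in X -> y \in X ->
    connect [rel u w | e u w && (u \in X) && (w \in X)] x y.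

Definition edges_in (X Y : {set T}) : {set T * T} :=
  [set q | [&& q.1 \in X, q.2 \in Y & e q.1 q.2]].

Lemma connected_in_set1 x : connected_in [set x].
Proof. by move=> y z; rewrite !inE => /eqP-> /eqP->; exact: connect0. Qed.

Lemma connected_in_fibre (T' : eqType) (p : T -> T') c :
  (forall x y, p x = p y -> connect [rel u w | e u w && (p u == p w)] x y) ->
  connected_in [set x | p x == c].
Proof.
move=> fibre x y; rewrite !inE => /eqP xc /eqP yc.
have /connectP[s + ->] := fibre x y (etrans xc (esym yc)).
elim: s x xc => [|z s IH] x xc /=; first by move=> _; exact: connect0.
case/andP=> /andP[exz /eqP pxz] pz.
apply: (connect_trans (y := z)); last by apply: IH => //; rewrite -pxz.
by apply: connect1; rewrite /= !inE exz -pxz xc eqxx.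
Qed.

Lemma connected_in_connect_const (T' : eqType) (p : T -> T') (X : {set T}) :
  connected_in X -> {in X &, forall x y, p x = p y} ->
  {in X &, forall x y, connect [rel u w | e u w && (p u == p w)] x y}.
Proof.
move=> connX pX x y xX yX; apply: connect_sub (connX x y xX yX) => u w.
by move=> /= /andP[/andP[euw uX] wX]; apply: connect1; rewrite /= euw (pX u w) ?eqxx.
Qed.

Lemma card_edges_split (X : {set T}) :
  #|[set q : T * T | e q.1 q.2]| =
  #|edges_in X X| + #|edges_in X (~: X)| + #|edges_in (~: X) X|
    + #|edges_in (~: X) (~: X)|.
Proof.
set E := [set q | _]; set L := [set q : T * T | q.1 \in X].
set R := [set q : T * T | q.2 \in X].
rewrite -(cardsID L E) -(cardsID R (E :&: L)) -(cardsID R (E :\: L)) !addnA.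
by congr (_ + _ + _ + _); apply: eq_card => q; rewrite !inE;
  case: (q.1 \in X); case: (q.2 \in X); case: (e q.1 q.2).
Qed.

Hypothesis e_sym : symmetric e.

Lemma edges_in_setU1 (X : {set T}) a b : a \in X -> b \notin X -> e a b ->
  #|edges_in X X| + 2 <= #|edges_in (b |: X) (b |: X)|.
Proof.
move=> aX bX eab.
have ab : a != b by apply: contraNneq bX => <-.
have sub : (a, b) |: ((b, a) |: edges_in X X) \subset edges_in (b |: X) (b |: X).
  apply/subsetP => q; rewrite !inE.
  case/orP => [/eqP-> /=|/orP [/eqP-> /=|/and3P [q1 q2 eq]]].
  - by rewrite eqxx eab aX !orbT.
  - by rewrite eqxx e_sym eab aX !orbT.
  - by rewrite q1 q2 eq !orbT.
apply: leq_trans (subset_leq_card sub).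
have ba_new : (b, a) \notin edges_in X X by rewrite !inE /= (negbTE bX).
have ab_new : (a, b) \notin (b, a) |: edges_in X X.
  by rewrite !inE /= (negbTE bX) !andbF orbF xpair_eqE (negbTE ab).
by rewrite !cardsU1 ba_new ab_new addn2.
Qed.

(* Grow a connected subset of X one neighbour at a time from a root r. *)
Lemma connected_in_edges (X : {set T}) :
  connected_in X -> 2 * (#|X| - 1) <= #|edges_in X X|.
Proof.
move=> connX; have [->|[r rX]] := set_0Vmem X; first by rewrite cards0.
have Xpos : 0 < #|X| by apply/card_gt0P; exists r.
suff [Y [sYX _ cardY edgesY]] : exists Y : {set T},
    [/\ Y \subset X, r \in Y, #|Y| = (#|X| - 1).+1 & 2 * (#|X| - 1) <= #|edges_in Y Y|].
  have YX : Y = X by apply/eqP; rewrite eqEcard sYX cardY; lia.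
  by move: edgesY; rewrite YX.
have : #|X| - 1 < #|X| by lia.
elim: (#|X| - 1) => [|k IH] ltkX.
  by exists [set r]; rewrite sub1set rX set11 cards1.
have [Y [sYX rY cardY edgesY]] := IH (ltnW ltkX).
have /subsetPn[y yX yY] : ~~ (X \subset Y).
  by apply/negP => /subset_leq_card; lia.
have [a [b [aY bY /andP[/andP[eab aX] bX]]]] := connect_exit (connX r y rX yX) rY yY.
exists (b |: Y); split.
- by rewrite subUset sub1set bX sYX.
- by rewrite in_setU1 rY orbT.
- by rewrite cardsU1 bY cardY.
- by have := edges_in_setU1 aY bY eab; lia.
Qed.

(* In a tree the directed edge count 2 (|V| - 1) leaves room for only one edge out of X. *)
Lemma connected_split_cut (X : {set T}) x y :
  connected_in X -> connected_in (~: X) -> x \in X -> y \notin X -> connect e x y ->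
  #|[set q : T * T | e q.1 q.2]| <= 2 * (#|T| - 1) ->
  #|edges_in X (~: X)| = 1.
Proof.
move=> connX connX' xX yX /connect_exit/(_ xX yX)[a [b [aX bX eab]]].
have out_pos : 0 < #|edges_in X (~: X)|.
  by apply/card_gt0P; exists (a, b); rewrite !inE aX bX eab.
have in_pos : 0 < #|edges_in (~: X) X|.
  by apply/card_gt0P; exists (b, a); rewrite !inE aX bX e_sym eab.
have := connected_in_edges connX; have := connected_in_edges connX'.
have : 0 < #|X| by apply/card_gt0P; exists x.
have : 0 < #|~: X| by apply/card_gt0P; exists y; rewrite inE.
rewrite (card_edges_split X) -(cardsC X); lia.
Qed.

End InducedSubgraphs.

Section TwoVertexTrees.
Variables (n : nat) (G : stree n).
Hypothesis G2 : sm G = 2.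

Lemma sm2_other (u : 'I_(sm G)) : exists u', u != u'.
Proof.
have lt0 : 0 < sm G by rewrite G2.
have lt1 : 1 < sm G by rewrite G2.
case: (eqVneq u (Ordinal lt0)) => [->|ne]; last by exists (Ordinal lt0).
by exists (Ordinal lt1); apply/eqP => /(congr1 val).
Qed.

Lemma sm2_vertexP (u u' x : 'I_(sm G)) : u != u' -> x = u \/ x = u'.
Proof.
move=> uu'; case: (eqVneq x u) => [->|xu]; first by left.
case: (eqVneq x u') => [->|xu']; first by right.
have uniq3 : uniq [:: u; u'; x] by rewrite /= !inE negb_or uu' eq_sym xu eq_sym xu'.
have := max_card (mem [:: u; u'; x]); rewrite (card_uniqP uniq3) card_ord /= => lt2.
by rewrite G2 in lt2.
Qed.

Lemma sm2_setC1 (u u' : 'I_(sm G)) : u != u' -> ~: [set u] = [set u'].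
Proof.
move=> uu'; apply/setP => x; rewrite !inE.
by case: (sm2_vertexP x uu') => ->; rewrite eqxx ?(negbTE uu') // eq_sym.
Qed.

Lemma sm2_adj (u u' : 'I_(sm G)) : u != u' -> sadj u u'.
Proof.
move=> uu'.
have : 0 < #|[set q : 'I_(sm G) * 'I_(sm G) | sadj q.1 q.2]| by rewrite sadj_edges G2.
case/card_gt0P => -[x y]; rewrite inE /= => exy.
have xy : x != y by apply: contraTneq exy => ->; rewrite sadj_irr.
move: exy xy; case: (sm2_vertexP x uu') => ->; case: (sm2_vertexP y uu') => ->;
  by rewrite ?eqxx // sadj_sym.
Qed.

Lemma sm2_labC (u u' : 'I_(sm G)) : u != u' -> lab u' = ~: lab u.
Proof.
move=> uu'; apply/setP => i; rewrite !inE.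
by case: (sm2_vertexP (slf G i) uu') => ->; rewrite eqxx ?(negbTE uu') // eq_sym.
Qed.

Lemma sm2_lab_card (u : 'I_(sm G)) : 2 <= #|lab u|.
Proof.
have [u' uu'] := sm2_other u.
have : #|[set w | sadj u w]| <= #|[set u']|.
  apply/subset_leq_card/subsetP => w; rewrite !inE => uw.
  have wu : w != u by apply: contraTneq uw => ->; rewrite sadj_irr.
  by case: (sm2_vertexP w uu') => wE; rewrite wE ?eqxx in wu *.
rewrite cards1 => le1; rewrite -(leq_add2r 1).
exact: leq_trans (sdeg u) (leq_add (leqnn _) le1).
Qed.

End TwoVertexTrees.

Lemma inC_card n (Z : assignment n) B : inC Z B -> 2 <= #|B| /\ 2 <= #|~: B|.
Proof.
move=> [G [v [G2 _ <-]]]; have [v' vv'] := sm2_other G2 v.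
by rewrite -(sm2_labC G2 vv') !sm2_lab_card.
Qed.

Lemma tail_of_connected_split n (G : stree n) (T : {set 'I_(sm G)}) :
  T != set0 -> ~: T != set0 ->
  connected_in (@sadj n G) T -> connected_in (@sadj n G) (~: T) -> tail T.
Proof.
move=> /set0Pn[v vT] /set0Pn[u uT] connT connT'; rewrite inE in uT.
split=> //; first by apply/set0Pn; exists v.
rewrite -(connected_split_cut (@sadj_sym n G) connT connT' vT uT (sadj_conn v u)).
  by apply: eq_card => q; rewrite !inE.
by rewrite sadj_edges card_ord.
Qed.

Lemma contr_fibre_tail n (G G' : stree n) (p : 'I_(sm G) -> 'I_(sm G')) v :
  sm G' = 2 -> contr p ->
  tail [set u | p u == p v] /\ tlab [set u | p u == p v] = lab (p v).
Proof.
move=> G2 [onto fibre lf _]; split; last by apply/setP => i; rewrite !inE lf.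
have [w' vw'] := sm2_other G2 (p v); have [u pu] := onto w'.
have compl : ~: [set x | p x == p v] = [set x | p x == w'].
  apply/setP => x; rewrite !inE.
  by case: (sm2_vertexP G2 (p x) vw') => ->; rewrite !eqxx ?(negbTE vw') // eq_sym.
apply: tail_of_connected_split.
- by apply/set0Pn; exists v; rewrite inE.
- by apply/set0Pn; exists u; rewrite compl inE pu.
- exact: connected_in_fibre.
- by rewrite compl; apply: connected_in_fibre.
Qed.

Lemma contr_onto_sm2 n (G G' : stree n) (X : {set 'I_(sm G)}) (u u' : 'I_(sm G')) :
  sm G' = 2 -> u != u' ->
  connected_in (@sadj n G) X -> connected_in (@sadj n G) (~: X) ->
  (exists a b, [/\ a \in X, b \notin X & sadj a b]) ->
  (forall i, (slf G i \in X) = (slf G' i == u)) ->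
  contr (fun x => if x \in X then u else u').
Proof.
move=> G2 uu' connX connX' [a [b [aX bX eab]]] labX.
split.
- move=> v'; case: (sm2_vertexP G2 v' uu') => ->; first by exists a; rewrite aX.
  by exists b; rewrite (negbTE bX).
- move=> v w; case vX: (v \in X); case wX: (w \in X) => E.
  + by apply: (connected_in_connect_const connX) => // s t; rewrite /= => -> ->.
  all: try by rewrite E eqxx in uu'.
  apply: (connected_in_connect_const connX'); rewrite ?inE ?vX ?wX //.
  by move=> s t; rewrite !inE => /negbTE-> /negbTE->.
- move=> i; rewrite labX.
  by case: (sm2_vertexP G2 (slf G' i) uu') => ->; rewrite ?eqxx // eq_sym (negbTE uu').
- move=> v' w' vw'; split=> _; last exact: sm2_adj.
  case: (sm2_vertexP G2 v' uu') => vE; case: (sm2_vertexP G2 w' uu') => wE;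
    rewrite vE wE ?eqxx in vw' *; rewrite ?eqxx // in vw'.
  + by exists a, b; rewrite aX (negbTE bX).
  + by exists b, a; rewrite aX (negbTE bX) sadj_sym.
Qed.

Definition path3 : rel 'I_3 := [rel x y : 'I_3 | (x.+1 == y :> nat) || (y.+1 == x :> nat)].
Definition o0 : 'I_3 := @Ordinal 3 0 isT.
Definition o1 : 'I_3 := @Ordinal 3 1 isT.
Definition o2 : 'I_3 := @Ordinal 3 2 isT.

Lemma ord3P (x : 'I_3) : [\/ x = o0, x = o1 | x = o2].
Proof.
by case: x => [[|[|[|m]]] lt_m3]; [constructor 1 | constructor 2 | constructor 3 | by []];
  apply: val_inj.
Qed.

Lemma path3_sym : symmetric path3.
Proof. by move=> x y; rewrite /path3 /= orbC. Qed.

Lemma path3_irr : irreflexive path3.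
Proof. by move=> x; rewrite /path3 /= orbb; apply/negP => /eqP; lia. Qed.

Lemma path3_edges : #|[set q : 'I_3 * 'I_3 | path3 q.1 q.2]| = 2 * (3 - 1).
Proof.
rewrite (@eq_card _ _ (mem [:: (o0, o1); (o1, o0); (o1, o2); (o2, o1)])).
  by rewrite (card_uniqP _).
by case=> [[[|[|[|?]]] ?] [[|[|[|?]]] ?]]; rewrite !inE.
Qed.

Lemma path3_connected_in (X : {set 'I_3}) :
  (o0 \in X -> o2 \in X -> o1 \in X) -> connected_in path3 X.
Proof.
move=> convex x y; case: (ord3P x) => ->; case: (ord3P y) => -> yX xX;
  first [ exact: connect0
        | by apply: connect1; rewrite /= xX yX
        | by apply: (connect_trans (y := o1)); apply: connect1; rewrite /= ?xX ?yX convex ].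
Qed.

Lemma path3_conn (x y : 'I_3) : connect path3 x y.
Proof.
have := path3_connected_in (X := setT) (fun _ _ => in_setT o1) (in_setT x) (in_setT y).
by apply: connect_sub => u w /andP[/andP[uw _] _]; apply: connect1.
Qed.

Definition path3_leaf n (B1 B2 : {set 'I_n}) (i : 'I_n) : 'I_3 :=
  if i \notin B2 then o0 else if i \in B1 then o1 else o2.

Lemma path3_leafE n (B1 B2 : {set 'I_n}) x i : ~: B2 \subset B1 ->
  (path3_leaf B1 B2 i == x) = [|| (x == o0) && (i \notin B2),
                                 (x == o1) && (i \in B1 :&: B2) | (x == o2) && (i \notin B1)].
Proof.
move/subsetP/(_ i); rewrite /path3_leaf !inE.
by case: (ord3P x) => ->; case: (i \in B2); case: (i \in B1) => // /(_ isT).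
Qed.

Lemma path3_leaf_deg n (B1 B2 : {set 'I_n}) :
  ~: B2 \subset B1 -> 2 <= #|~: B2| -> 2 <= #|~: B1| -> B1 :&: B2 != set0 ->
  forall v, 3 <= #|[set i | path3_leaf B1 B2 i == v]| + #|[set w | path3 v w]|.
Proof.
move=> cover cB2 cB1 meet v.
have nbrs x (Y : {set 'I_3}) : {subset Y <= path3 x} -> #|Y| <= #|[set w | path3 x w]|.
  by move=> sYx; apply/subset_leq_card/subsetP => w /sYx xw; rewrite inE.
have leaves x (A : {set 'I_n}) : (forall i, (path3_leaf B1 B2 i == x) = (i \in A)) ->
    #|[set i | path3_leaf B1 B2 i == x]| = #|A|.
  by move=> xA; apply: eq_card => i; rewrite inE xA.
case: (ord3P v) => ->.
- rewrite (leaves _ (~: B2)) => [|i]; last by rewrite (path3_leafE _ _ cover) !inE /= ?orbF.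
  have := nbrs o0 [set o1]; rewrite cards1 => h.
  by apply: leq_add cB2 (h _) => w; rewrite inE => /eqP->.
- rewrite (leaves _ (B1 :&: B2)) => [|i]; last by rewrite (path3_leafE _ _ cover) /= ?orbF.
  have := nbrs o1 [set o0; o2]; rewrite cards2 => h.
  have meet_pos : 0 < #|B1 :&: B2| by rewrite card_gt0.
  by apply: leq_add meet_pos (h _) => w; rewrite !inE => /orP[]/eqP->.
- rewrite (leaves _ (~: B1)) => [|i]; last by rewrite (path3_leafE _ _ cover) !inE /= ?orbF.
  have := nbrs o2 [set o1]; rewrite cards1 => h.
  by apply: leq_add cB1 (h _) => w; rewrite inE => /eqP->.
Qed.

Definition path3_tree n (B1 B2 : {set 'I_n}) deg : stree n :=
  @STree n 3 (path3_leaf B1 B2) path3 path3_sym path3_irr isT path3_conn path3_edges deg.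

Section ExtremalAssignments.
Variables (n : nat) (Z : assignment n).
Hypothesis Zext : extremal Z.

Lemma extremal_pullback (G G' : stree n) (p : 'I_(sm G) -> 'I_(sm G')) v :
  contr p -> p v \in Z G' -> v \in Z G.
Proof. by move=> hp pvZ; apply: ((proj2 Zext) G G' p hp (p v)).1. Qed.

Lemma extremal_not_full (G : stree n) : exists v, v \notin Z G.
Proof.
have /subsetPn[v _ vZ] : ~~ ([set: 'I_(sm G)] \subset Z G).
  by rewrite subTset; exact: (proj1 Zext G).
by exists v.
Qed.

(* A connected split X | ~X of G inducing the cut B contracts G onto the witness of B. *)
Lemma inC_cut_sub_Z B (G : stree n) (X : {set 'I_(sm G)}) :
  inC Z B -> connected_in (@sadj n G) X -> connected_in (@sadj n G) (~: X) ->
  (exists a b, [/\ a \in X, b \notin X & sadj a b]) ->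
  (forall i, (slf G i \in X) = (i \in B)) -> X \subset Z G.
Proof.
move=> [G' [u [G2 uZ labu]]] connX connX' cross labX.
have [u' uu'] := sm2_other G2 u.
have labXu i : (slf G i \in X) = (slf G' i == u) by rewrite labX -labu inE.
have hp := contr_onto_sm2 G2 uu' connX connX' cross labXu.
by apply/subsetP => x xX; apply: (extremal_pullback hp); rewrite xX.
Qed.

Lemma inC_setC_false B : inC Z B -> inC Z (~: B) -> False.
Proof.
move=> CB [G [v [G2 vZ labv]]]; have [v' vv'] := sm2_other G2 v.
have v'v : v' != v by rewrite eq_sym.
have labv' : lab v' = B by rewrite (sm2_labC G2 vv') labv setCK.
have v'Z : [set v'] \subset Z G.
  apply: (inC_cut_sub_Z CB); rewrite ?(sm2_setC1 G2 v'v); try exact: connected_in_set1.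
  - by exists v', v; rewrite !inE eqxx vv' (sm2_adj G2 v'v).
  - by move=> i; rewrite -labv' !inE.
have [x xZ] := extremal_not_full G.
by case: (sm2_vertexP G2 x vv') xZ => ->; rewrite ?vZ ?(subsetP v'Z) ?inE.
Qed.

(* If B1 and B2 overlap and cover [n], both witnesses are contractions of the path tree
   ~B2 - (B1 :&: B2) - ~B1, which would then lie entirely in Z. *)
Lemma inC_overlap_false B1 B2 :
  inC Z B1 -> inC Z B2 -> ~: B2 \subset B1 -> B1 :&: B2 != set0 -> False.
Proof.
move=> C1 C2 cover meet.
have [_ cB1] := inC_card C1; have [_ cB2] := inC_card C2.
pose G := path3_tree (path3_leaf_deg cover cB2 cB1 meet).
have Z01 : [set x | x != o2] \subset Z G.
  apply: (@inC_cut_sub_Z B1 G [set x | x != o2] C1);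
    try by apply: path3_connected_in; rewrite !inE.
  - by exists o1, o2; rewrite !inE.
  - by move=> i; rewrite inE (path3_leafE _ _ cover) /= ?orbF negbK.
have Z12 : [set x | x != o0] \subset Z G.
  apply: (@inC_cut_sub_Z B2 G [set x | x != o0] C2);
    try by apply: path3_connected_in; rewrite !inE.
  - by exists o1, o0; rewrite !inE.
  - by move=> i; rewrite inE (path3_leafE _ _ cover) /= ?orbF negbK.
have [x xZ] := extremal_not_full G.
case: (ord3P x) xZ => -> /negP[];
  [apply: (subsetP Z01) | apply: (subsetP Z01) | apply: (subsetP Z12)]; by rewrite inE.
Qed.

Lemma inC_uncovered B1 B2 : inC Z B1 -> inC Z B2 -> exists i, i \notin B1 :|: B2.
Proof.
move=> C1 C2; case: (boolP [forall i, i \in B1 :|: B2]) => [/forallP cover|]; last first.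
  by case/forallPn => i; exists i.
exfalso; have [disj|meet] := eqVneq (B1 :&: B2) set0.
  apply: (inC_setC_false C1); suff <- : B2 = ~: B1 by [].
  apply/setP => i; have := cover i; have := in_set0 i; rewrite -disj !inE.
  by case: (i \in B1); case: (i \in B2).
apply: (inC_overlap_false C1 C2 _ meet); apply/subsetP => i.
by have := cover i; rewrite !inE; case: (i \in B1); case: (i \in B2).
Qed.

End ExtremalAssignments.

Lemma inC_maximal n (Z : assignment n) B : inC Z B -> exists2 B', maximalC Z B' & B \subset B'.
Proof.
have [m sizeB] := ubnP (n - #|B|); elim: m => // m IH in B sizeB *; move=> CB.
case: (classic (exists B', [/\ inC Z B', B \subset B' & B' != B])); last first.
  move=> noLarger; exists B => //; split=> // B' CB' sBB'.
  by apply/eqP/negPn/negP => neB'; apply: noLarger; exists B'.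
case=> B' [CB' sBB' neB'].
have ltBB' : B \proper B' by rewrite properEneq sBB' andbT eq_sym.
have [B'' maxB'' sB'B''] : exists2 B'', maximalC Z B'' & B' \subset B''.
  apply: IH CB'; have : #|B'| <= n := leq_trans (max_card B') (eq_leq (card_ord n)).
  by have := proper_card ltBB'; lia.
by exists B'' => //; apply: subset_trans sB'B''.
Qed.

Definition admissible_weights n (Z : assignment n) (k : 'I_n -> nat) (D : nat) :=
  [/\ forall i, 0 < k i <= D, 2 * D < \sum_(i in [set: 'I_n]) k i &
      forall B, maximalC Z B -> \sum_(i in B) k i <= D].

Definition scaled_weights n (k : 'I_n -> nat) (D : nat) (i : 'I_n) : rat :=
  ((k i)%:R / D%:R)%R.

Section AdmissibleWeights.
Variables (n : nat) (Z : assignment n) (k : 'I_n -> nat) (D : nat).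
Hypothesis kD : admissible_weights Z k D.

Lemma admissible_D_gt0 : 0 < D.
Proof.
case: kD; case: D => // k_le0 sum_gt0 _.
by rewrite big1 // in sum_gt0 => i _; have := k_le0 i; lia.
Qed.

Lemma sum_scaled_weights (A : {pred 'I_n}) :
  (\sum_(i in A) scaled_weights k D i = (\sum_(i in A) k i)%:R / D%:R)%R.
Proof. by rewrite natr_sum mulr_suml. Qed.

Lemma admissible_weight_data : weight_data (scaled_weights k D).
Proof.
have D_gt0 : (0 < D%:R :> rat)%R by rewrite ltr0n admissible_D_gt0.
case: kD => k_le_D sum_gt _; split.
  move=> i; have /andP[k_gt0 k_le] := k_le_D i.
  rewrite /scaled_weights divr_gt0 ?ltr0n ?admissible_D_gt0 //=.
  by rewrite ler_pdivrMr // mul1r ler_nat.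
rewrite (eq_bigl (fun i => i \in [set: 'I_n])) => [|i]; last by rewrite inE.
by rewrite sum_scaled_weights ltr_pdivlMr // -natrM ltr_nat.
Qed.

(* The fibre of v under a contraction onto a two-vertex tree is a tail labelled by a member
   of C. *)
Lemma admissible_sub_ZA : smooth Z ->
  forall (G : stree n) (v : 'I_(sm G)), v \in Z G -> inZA (scaled_weights k D) v.
Proof.
move=> Zsmooth G v vZ; have [G' [p [G2 hp pvZ]]] := Zsmooth G v vZ.
have [tailT labT] := contr_fibre_tail v G2 hp.
have [B maxB sB] : exists2 B, maximalC Z B & lab (p v) \subset B.
  by apply: inC_maximal; exists G', (p v).
exists [set u | p u == p v]; split; rewrite ?inE //.
rewrite labT sum_scaled_weights ler_pdivrMr ?ltr0n ?admissible_D_gt0 // mul1r ler_nat.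
case: kD => _ _ /(_ B maxB); apply: leq_trans.
by rewrite [X in _ <= X](big_setID (lab (p v))) (setIidPr sB) leq_addr.
Qed.

End AdmissibleWeights.

Lemma sum_nat_bump n (A : {set 'I_n}) (f : 'I_n -> nat) (j : 'I_n) d :
  \sum_(i in A) (f i + (i == j) * d) = \sum_(i in A) f i + (j \in A) * d.
Proof.
rewrite big_split /=; congr (_ + _); case: (boolP (j \in A)) => jA.
  by rewrite (bigD1 j) //= eqxx big1 ?addn0 // => i /andP[_ /negbTE->].
by rewrite big1 // => i iA; case: eqP => // eij; rewrite -eij iA in jA.
Qed.

Lemma sum_nat_ifin n (A S : {set 'I_n}) y z :
  \sum_(i in A) (if i \in S then y else z) = #|A :&: S| * y + #|A :\: S| * z.
Proof.
rewrite (big_setID S) -!sum_nat_const /=; congr (_ + _); apply: eq_bigr => i.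
  by rewrite inE => /andP[_ ->].
by rewrite inE => /andP[/negbTE-> _].
Qed.

Lemma admissible_of_uncovered n (Z : assignment n) (j : 'I_n) : 3 <= n ->
  (forall B, maximalC Z B -> j \notin B) -> exists k D, admissible_weights Z k D.
Proof.
move=> n_ge3 jB; exists (fun i => 1 + (i == j) * (n - 3)), (n - 2); split.
- by move=> i; case: (i == j); lia.
- by rewrite sum_nat_bump sum1_card cardsT card_ord in_setT; lia.
- move=> B maxB; rewrite sum_nat_bump sum1_card (negbTE (jB B maxB)).
  have [_ cBC] := inC_card maxB.1; have := cardsC B; rewrite card_ord; lia.
Qed.

Lemma admissible_of_small n (Z : assignment n) : 3 <= n ->
  (forall B, maximalC Z B -> #|B| * 2 < n) -> exists k D, admissible_weights Z k D.
Proof.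
move=> n_ge3 small; exists (fun _ => 2), (n - 1); split.
- by move=> i; lia.
- by rewrite sum_nat_const cardsT card_ord; lia.
- by move=> B /small; rewrite sum_nat_const; lia.
Qed.

(* With c = |Bj| and m = n - c: weight 1 on Bj, c off Bj, and the extra (m - 1) c - 1 on j make
   every maximal member weigh at most m c - 1 while the total is 2 m c - 1. *)
Lemma admissible_of_unique_cover n (Z : assignment n) (j : 'I_n) Bj : extremal Z ->
  maximalC Z Bj -> j \in Bj -> (forall B, maximalC Z B -> j \in B -> B = Bj) ->
  exists k D, admissible_weights Z k D.
Proof.
move=> Zext maxBj jBj uniqBj; have [cBj mBj] := inC_card maxBj.1.
have := cardsC Bj; rewrite card_ord; set c := #|Bj|; set m := #|~: Bj| => nE.
exists (fun i => (if i \in Bj then 1 else c) + (i == j) * ((m - 1) * c - 1)), (m * c - 1).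
split.
- by move=> i; case: (i \in Bj); case: (i == j); nia.
- by rewrite sum_nat_bump sum_nat_ifin setTI setTD in_setT; nia.
move=> B maxB; case: (eqVneq B Bj) => [->|neBj].
  by rewrite sum_nat_bump sum_nat_ifin setIid setDv cards0 jBj; nia.
have jB : j \notin B by apply: contra neBj => jB; rewrite (uniqBj B maxB jB).
have [i0] := inC_uncovered Zext maxB.1 maxBj.1; rewrite inE negb_or => /andP[i0B i0Bj].
have inside : #|B :&: Bj| < c.
  apply/proper_card/properP; split; first exact: subsetIr.
  by exists j; rewrite // inE (negbTE jB).
have outside : #|B :\: Bj| < m.
  apply/proper_card/properP; split; first by rewrite setDE subsetIr.
  by exists i0; rewrite !inE ?i0Bj // (negbTE i0B).
by rewrite sum_nat_bump sum_nat_ifin (negbTE jB); nia.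
Qed.

Theorem proposition7p14 (n : nat) (Hn : 3 <= n) (Z : assignment n) :
  extremal Z -> smooth Z ->
  ((exists j : 'I_n, forall B, maximalC Z B -> j \notin B) \/
   (exists j : 'I_n, exists B, [/\ maximalC Z B, j \in B &
       forall B', maximalC Z B' -> j \in B' -> B' = B]) \/
   (forall B, maximalC Z B -> #|B| * 2 < n)) ->
  exists a : 'I_n -> rat, weight_data a /\
    forall (G : stree n) (v : 'I_(sm G)), v \in Z G -> inZA a v.
Proof.
move=> Zext Zsmooth cases.
have [k [D kD]] : exists k D, admissible_weights Z k D.
  case: cases => [[j jB] | [[j [Bj [maxBj jBj uniqBj]]] | small]].
  - exact: admissible_of_uncovered Hn jB.
  - exact: admissible_of_unique_cover Zext maxBj jBj uniqBj.
  - exact: admissible_of_small Hn small.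
exists (scaled_weights k D); split; first exact: admissible_weight_data kD.
exact: admissible_sub_ZA kD Zsmooth.
Qed.
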